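(* Let $A^*\in\mathbb C^{N\times n}$ be isometric ($AA^*=I_n$), let $\mathcal X=\mathbb R^n$ or $\mathcal X=\mathbb R^n_+$, let $x_0\in\mathcal X\setminus\{0\}$, $b=|A^*x_0|$, and let $\mathcal F(x)=\big[A\big(b\odot\frac{A^*x}{|A^*x|}\big)\big]_{\mathcal X}$. Suppose $$\tilde\lambda_2:=\max\{\|\Im(B^* )u\|:\ u\in\mathbb R^n,\ \langle u,x_0\rangle=0,\ \|u\|=1\}<1.$$ Then for every $0<\epsilon<1-\tilde\lambda_2^2$ there is a neighborhood of $x_0$ such that for every $x^{(1)}$ in it, the iterates $x^{(k+1)}=\mathcal F^k(x^{(1)})$ satisfy $$\|\alpha^{(k+1)}x^{(k+1)}-x_0\|\le(\tilde\lambda_2^2+\epsilon)\|\alpha^{(k)}x^{(k)}-x_0\|\quad\text{for all }k\ge1,$$ where $\alpha^{(k)}:=\arg\min_{\alpha\in\{\pm1\}}\|\alpha x^{(k)}-x_0\|$, and $\alpha^{(k)}:=1$ if $\mathcal X=\mathbb R^n_+$.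
   Context: $|y|$ is the componentwise modulus, $\odot$ the componentwise product, $y/|y|$ the componentwise quotient with convention $y(j)/|y(j)|=1$ if $y(j)=0$. $[\cdot]_{\mathcal X}$ is Euclidean projection onto $\mathcal X$ (for $\mathcal X=\mathbb R^n$: $x\mapsto\Re x$; for $\mathbb R^n_+$: $x\mapsto\max(\Re x,0)$ componentwise). $B:=A\,\mathrm{diag}\big(\frac{A^*x_0}{|A^*x_0|}\big)$ and $\Im(B^* )$ is its entrywise imaginary part. *)

From Stdlib Require Import Reals Lra.
Open Scope R_scope.

Definition C : Type := (R * R)%type.
Definition Cre (z : C) : R := fst z.
Definition Cim (z : C) : R := snd z.
Definition CofR (r : R) : C := (r, 0).
Definition C0 : C := (0, 0).
Definition C1 : C := (1, 0).
Definition Cadd (z w : C) : C := (fst z + fst w, snd z + snd w).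
Definition Cmul (z w : C) : C :=
  (fst z * fst w - snd z * snd w, fst z * snd w + snd z * fst w).
Definition Cconj (z : C) : C := (fst z, - snd z).
Definition Cscale (r : R) (z : C) : C := (r * fst z, r * snd z).
Definition Cmod (z : C) : R := sqrt (fst z ^ 2 + snd z ^ 2).
(* z/|z|, with the convention z/|z| = 1 when z = 0 *)
Definition Cphase (z : C) : C :=
  if Req_EM_T (Cmod z) 0 then C1 else Cscale (/ Cmod z) z.

Fixpoint rsum (n : nat) (f : nat -> R) : R :=
  match n with O => 0 | S m => rsum m f + f m end.
Fixpoint csum (n : nat) (f : nat -> C) : C :=
  match n with O => C0 | S m => Cadd (csum m f) (f m) end.

(* ---------- real vectors in R^n (only indices < n matter) ---------- *)
Definition vec := nat -> R.
Definition vinner (n : nat) (u v : vec) : R := rsum n (fun i => u i * v i).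
Definition vnorm (n : nat) (u : vec) : R := sqrt (vinner n u u).
Definition vsub (u v : vec) : vec := fun i => u i - v i.
Definition vscal (a : R) (u : vec) : vec := fun i => a * u i.

(* A i j, i < n (rows), j < N (columns); Astar j i = conj (A i j). *)
Definition cmat := nat -> nat -> C.

Definition isometric (n N : nat) (A : cmat) : Prop :=
  forall i i', (i < n)%nat -> (i' < n)%nat ->
    csum N (fun j => Cmul (A i j) (Cconj (A i' j)))
    = (if Nat.eq_dec i i' then C1 else C0).

Definition Astar_apply (n : nat) (A : cmat) (x : vec) : nat -> C :=
  fun j => csum n (fun i => Cmul (Cconj (A i j)) (CofR (x i))).

Inductive Xkind := Xfull | Xpos .

Definition inX (X : Xkind) (n : nat) (x : vec) : Prop :=
  match X with
  | Xfull => True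
  | Xpos => forall i, (i < n)%nat -> 0 <= x i
  end.

Definition projX (X : Xkind) (y : nat -> C) : vec :=
  match X with
  | Xfull => fun i => Cre (y i)
  | Xpos => fun i => Rmax (Cre (y i)) 0
  end.

Definition bvec (n : nat) (A : cmat) (x0 : vec) : nat -> R :=
  fun j => Cmod (Astar_apply n A x0 j).

Definition Fmap (X : Xkind) (n N : nat) (A : cmat) (x0 : vec) (x : vec) : vec :=
  projX X (fun i => csum N (fun j =>
     Cmul (A i j) (Cscale (bvec n A x0 j) (Cphase (Astar_apply n A x j))))).

(* B = A diag(Astar x0 / |Astar x0|) *)
Definition Bmat (n : nat) (A : cmat) (x0 : vec) : cmat :=
  fun i j => Cmul (A i j) (Cphase (Astar_apply n A x0 j)).

(* || Im(Bstar) u ||, with Im(Bstar) the real N x n matrix, entry (j,i) = Im(conj(B i j)) *)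
Definition ImBstar_norm (n N : nat) (A : cmat) (x0 : vec) (u : vec) : R :=
  sqrt (rsum N (fun j =>
    (rsum n (fun i => Cim (Cconj (Bmat n A x0 i j)) * u i)) ^ 2)).

Definition is_lambda2 (n N : nat) (A : cmat) (x0 : vec) (lam2 : R) : Prop :=
  (exists u : vec, vinner n u x0 = 0 /\ vnorm n u = 1 /\
                   ImBstar_norm n N A x0 u = lam2) /\
  (forall u : vec, vinner n u x0 = 0 -> vnorm n u = 1 ->
                   ImBstar_norm n N A x0 u <= lam2).

Definition alpha (X : Xkind) (n : nat) (x0 x : vec) : R :=
  match X with
  | Xpos => 1
  | Xfull =>
      if Rle_dec (vnorm n (vsub x x0)) (vnorm n (vsub (vscal (-1) x) x0))
      then 1 else -1
  end.

From Pilot Require Import Defs.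
From Stdlib Require Import Reals Lra Lia Psatz.
Open Scope R_scope.

(* Write x = x0 + e.  The nonzero entries of b = |A^* x0| are bounded below by some
   beta > 0, and there the phase map linearizes:
     b (A^* x)/|A^* x| = A^* x0 + i q (A^* x0)/|A^* x0| + O(|e|^2 / beta),
   where q is Im(B^* ) e restricted to the support of b.  Applying A and taking real
   parts (A A^* = I), x0 is reproduced and the first-order term becomes
   Im(B^* )^T S Im(B^* ) e with S a 0/1 diagonal.  Since Im(B^* ) x0 = 0, the bound
   lam2 on the orthogonal complement of x0 is a bound on all of R^n, so this term has
   norm at most lam2^2 |e|; the projection onto X does not increase the distance to
   x0 in X.  Hence |F x - x0| <= (lam2^2 + eps) |e| on a small ball, which the iterates
   therefore never leave, and on which alpha = 1. *)

Lemma rsum_ext n f g : (forall i, (i < n)%nat -> f i = g i) -> rsum n f = rsum n g.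
Proof.
  induction n as [|n IH]; intros H; simpl; [reflexivity|].
  rewrite IH by (intros; apply H; lia). now rewrite H by lia.
Qed.

Lemma rsum_add n f g : rsum n (fun i => f i + g i) = rsum n f + rsum n g.
Proof. induction n; cbn [rsum]; [ring|rewrite IHn; ring]. Qed.

Lemma rsum_sub n f g : rsum n (fun i => f i - g i) = rsum n f - rsum n g.
Proof. induction n; cbn [rsum]; [ring|rewrite IHn; ring]. Qed.

Lemma rsum_scal n c f : rsum n (fun i => c * f i) = c * rsum n f.
Proof. induction n; cbn [rsum]; [ring|rewrite IHn; ring]. Qed.

Lemma rsum_0 n : rsum n (fun _ => 0) = 0.
Proof. induction n; cbn [rsum]; [ring|rewrite IHn; ring]. Qed.

Lemma rsum_le n f g : (forall i, (i < n)%nat -> f i <= g i) -> rsum n f <= rsum n g.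
Proof.
  induction n as [|n IH]; intros H; simpl; [lra|].
  assert (rsum n f <= rsum n g) by (apply IH; intros; apply H; lia).
  assert (f n <= g n) by (apply H; lia). lra.
Qed.

Lemma rsum_ge0 n f : (forall i, (i < n)%nat -> 0 <= f i) -> 0 <= rsum n f.
Proof. intros H. rewrite <- (rsum_0 n). now apply rsum_le. Qed.

Lemma rsum_sq_ge0 n f : 0 <= rsum n (fun i => f i ^ 2).
Proof. apply rsum_ge0. intros. apply pow2_ge_0. Qed.

Lemma rsum_term_le n f j : (forall i, (i < n)%nat -> 0 <= f i) -> (j < n)%nat ->
  f j <= rsum n f.
Proof.
  induction n as [|n IH]; intros H Hj; [lia|]. simpl.
  assert (0 <= rsum n f) by (apply rsum_ge0; intros; apply H; lia).
  assert (0 <= f n) by (apply H; lia).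
  destruct (Nat.eq_dec j n) as [->|Hjn]; [lra|].
  assert (f j <= rsum n f) by (apply IH; [intros; apply H|]; lia). lra.
Qed.

Lemma rsum_swap n m (F : nat -> nat -> R) :
  rsum n (fun i => rsum m (fun j => F i j)) = rsum m (fun j => rsum n (fun i => F i j)).
Proof.
  induction n; simpl; [now rewrite rsum_0|].
  now rewrite rsum_add, IHn.
Qed.

Lemma rsum_delta n i (y : nat -> R) : (i < n)%nat ->
  rsum n (fun i' => (if Nat.eq_dec i i' then 1 else 0) * y i') = y i.
Proof.
  induction n as [|n IH]; intros Hi; [lia|]. simpl.
  destruct (Nat.eq_dec i n) as [->|Hin].
  - rewrite (rsum_ext n _ (fun _ => 0)), rsum_0; [ring|].
    intros i' Hi'. destruct (Nat.eq_dec n i'); [lia|ring].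
  - rewrite IH by lia. ring.
Qed.

Lemma rsum_sq_eq0 n (u : nat -> R) :
  rsum n (fun i => u i ^ 2) = 0 -> forall i, (i < n)%nat -> u i = 0.
Proof.
  intros H i Hi.
  assert (u i ^ 2 <= 0).
  { rewrite <- H. apply (rsum_term_le n (fun i => u i ^ 2)); auto.
    intros; apply pow2_ge_0. }
  nra.
Qed.

Lemma sum_sq_ge0 a b : 0 <= a ^ 2 + b ^ 2.
Proof. pose proof (pow2_ge_0 a). pose proof (pow2_ge_0 b). lra. Qed.

Lemma discriminant_le F G H : 0 <= F -> 0 <= G ->
  (forall t, 0 <= F - 2 * t * H + t ^ 2 * G) -> H <= sqrt F * sqrt G.
Proof.
  intros HF HG Hq.
  destruct (Rle_dec H 0).
  { pose proof (sqrt_pos F). pose proof (sqrt_pos G). nra. }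
  assert (H2 : H ^ 2 <= F * G).
  { destruct (Req_dec G 0) as [G0|G0].
    - specialize (Hq ((F + 1) / (2 * H))). rewrite G0 in Hq.
      replace (2 * ((F + 1) / (2 * H)) * H) with (F + 1) in Hq by (field; lra). lra.
    - specialize (Hq (H / G)).
      replace (F - 2 * (H / G) * H + (H / G) ^ 2 * G) with ((F * G - H ^ 2) / G) in Hq
        by (field; lra).
      assert (0 <= (F * G - H ^ 2) / G * G) by (apply Rmult_le_pos; lra).
      replace ((F * G - H ^ 2) / G * G) with (F * G - H ^ 2) in * by (field; lra). lra. }
  rewrite <- sqrt_mult, <- (sqrt_pow2 H) by lra.
  apply sqrt_le_1_alt. lra.
Qed.

Lemma Cauchy_Schwarz_rsum2 n f1 f2 g1 g2 :
  rsum n (fun j => f1 j * g1 j + f2 j * g2 j) <=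
  sqrt (rsum n (fun j => f1 j ^ 2 + f2 j ^ 2)) * sqrt (rsum n (fun j => g1 j ^ 2 + g2 j ^ 2)).
Proof.
  apply discriminant_le; [apply rsum_ge0; intros; apply sum_sq_ge0 .. |intros t].
  assert (E : rsum n (fun j => (f1 j - t * g1 j) ^ 2 + (f2 j - t * g2 j) ^ 2) =
    rsum n (fun j => f1 j ^ 2 + f2 j ^ 2) - 2 * t * rsum n (fun j => f1 j * g1 j + f2 j * g2 j)
    + t ^ 2 * rsum n (fun j => g1 j ^ 2 + g2 j ^ 2))
    by (induction n; cbn [rsum]; [ring|rewrite IHn; ring]).
  rewrite <- E. apply rsum_ge0. intros. apply sum_sq_ge0.
Qed.

Lemma Cauchy_Schwarz_rsum n f g :
  rsum n (fun j => f j * g j) <=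
  sqrt (rsum n (fun j => f j ^ 2)) * sqrt (rsum n (fun j => g j ^ 2)).
Proof.
  pose proof (Cauchy_Schwarz_rsum2 n f (fun _ => 0) g (fun _ => 0)) as H.
  rewrite (rsum_ext n (fun j => _ + 0 * 0) (fun j => f j * g j)),
    (rsum_ext n (fun j => f j ^ 2 + 0 ^ 2) (fun j => f j ^ 2)),
    (rsum_ext n (fun j => g j ^ 2 + 0 ^ 2) (fun j => g j ^ 2)) in H by (intros; ring).
  exact H.
Qed.

Lemma vnorm_eq n u : vnorm n u = sqrt (rsum n (fun i => u i ^ 2)).
Proof. unfold vnorm, vinner. f_equal. apply rsum_ext. intros. ring. Qed.

Lemma vnorm_ge0 n u : 0 <= vnorm n u.
Proof. apply sqrt_pos. Qed.

Lemma vnorm_sq n u : vnorm n u ^ 2 = rsum n (fun i => u i ^ 2).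
Proof. rewrite vnorm_eq. apply pow2_sqrt, rsum_sq_ge0. Qed.

Lemma vnorm_ext n u v : (forall i, (i < n)%nat -> u i = v i) -> vnorm n u = vnorm n v.
Proof. intros H. rewrite !vnorm_eq. f_equal. apply rsum_ext. intros. now rewrite H. Qed.

Lemma vnorm_le_compat n u v : (forall i, (i < n)%nat -> u i ^ 2 <= v i ^ 2) ->
  vnorm n u <= vnorm n v.
Proof. intros H. rewrite !vnorm_eq. now apply sqrt_le_1_alt, rsum_le. Qed.

Lemma vnorm_pos n x : (exists i, (i < n)%nat /\ x i <> 0) -> 0 < vnorm n x.
Proof.
  intros [i [Hi Hx]]. destruct (vnorm_ge0 n x) as [|E]; [assumption|exfalso].
  apply Hx. apply (rsum_sq_eq0 n x); [|assumption].
  rewrite <- vnorm_sq, <- E. ring.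
Qed.

Lemma vnorm_scal n c u : vnorm n (vscal c u) = Rabs c * vnorm n u.
Proof.
  rewrite !vnorm_eq, <- sqrt_Rsqr_abs, <- sqrt_mult by (apply Rle_0_sqr || apply rsum_sq_ge0).
  f_equal. rewrite <- rsum_scal. apply rsum_ext. intros. unfold vscal, Rsqr. ring.
Qed.

Lemma vinner_le n u v : vinner n u v <= vnorm n u * vnorm n v.
Proof. rewrite !vnorm_eq. apply Cauchy_Schwarz_rsum. Qed.

Lemma vnorm_add_sq n u v :
  vnorm n (fun i => u i + v i) ^ 2 = vnorm n u ^ 2 + 2 * vinner n u v + vnorm n v ^ 2.
Proof.
  rewrite !vnorm_sq. unfold vinner. rewrite <- rsum_scal, <- !rsum_add.
  apply rsum_ext. intros. ring.
Qed.

Lemma vnorm_add_le n u v : vnorm n (fun i => u i + v i) <= vnorm n u + vnorm n v.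
Proof.
  pose proof (vnorm_add_sq n u v). pose proof (vinner_le n u v).
  pose proof (vnorm_ge0 n u). pose proof (vnorm_ge0 n v).
  pose proof (vnorm_ge0 n (fun i => u i + v i)). nra.
Qed.

Lemma orthogonal_part n (x0 e : vec) : 0 < vnorm n x0 ->
  exists c, vinner n (vsub e (vscal c x0)) x0 = 0 /\ vnorm n (vsub e (vscal c x0)) <= vnorm n e.
Proof.
  intros Hx0. set (g := vnorm n x0 ^ 2).
  assert (Hg : vinner n x0 x0 = g) by (unfold g; rewrite vnorm_sq; apply rsum_ext; intros; ring).
  exists (vinner n e x0 / g).
  assert (Hor : vinner n (vsub e (vscal (vinner n e x0 / g) x0)) x0 = 0).
  { unfold vinner at 1, vsub, vscal.
    rewrite (rsum_ext n _ (fun i => e i * x0 i - vinner n e x0 / g * (x0 i * x0 i)))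
      by (intros; ring).
    rewrite rsum_sub, rsum_scal. fold (vinner n e x0) (vinner n x0 x0). rewrite Hg.
    field. unfold g. nra. }
  split; [exact Hor|].
  set (c := vinner n e x0 / g) in *. set (u := vsub e (vscal c x0)) in *.
  assert (Hu : vinner n u (vscal c x0) = 0).
  { unfold vinner, vscal. rewrite (rsum_ext n _ (fun i => c * (u i * x0 i))) by (intros; ring).
    rewrite rsum_scal. fold (vinner n u x0). rewrite Hor. ring. }
  pose proof (vnorm_add_sq n u (vscal c x0)) as Hpyth.
  rewrite (vnorm_ext n _ e) in Hpyth by (intros; unfold u, vsub, vscal; ring).
  pose proof (vnorm_ge0 n u). pose proof (vnorm_ge0 n e).
  pose proof (pow2_ge_0 (vnorm n (vscal c x0))).
  nra.
Qed.

Lemma Cmod_ge0 z : 0 <= Cmod z.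
Proof. apply sqrt_pos. Qed.

Lemma Cmod_sq z : Cmod z ^ 2 = fst z ^ 2 + snd z ^ 2.
Proof. apply pow2_sqrt, sum_sq_ge0. Qed.

Lemma Cmod_eq0 z : Cmod z = 0 -> fst z = 0 /\ snd z = 0.
Proof. intros H. pose proof (Cmod_sq z) as E. rewrite H in E. nra. Qed.

Lemma Cphase_nonzero z : Cmod z <> 0 -> Cphase z = (fst z / Cmod z, snd z / Cmod z).
Proof.
  intros H. unfold Cphase. destruct (Req_EM_T (Cmod z) 0); [contradiction|].
  unfold Cscale. f_equal; unfold Rdiv; ring.
Qed.

(* In coordinates rotated so that [z = (b, 0)], a perturbation [d = (p, q)] with
   [|d| <= b/2] moves [b (z + d)/|z + d|] away from [z + (0, q)] by [O(|d|^2 / b)]. *)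
Lemma polar_perturbation b p q r : 0 < b -> 0 <= r -> r ^ 2 = (b + p) ^ 2 + q ^ 2 ->
  p ^ 2 + q ^ 2 <= b ^ 2 / 4 ->
  ((b * (b + p) / r - b) ^ 2 + (b * q / r - q) ^ 2) * b ^ 2 <= 8 * (p ^ 2 + q ^ 2) ^ 2.
Proof.
  intros Hb Hr0 Hr HD.
  assert (Hp : - (b / 2) <= p <= b / 2) by (split; nra).
  assert (Hr' : 0 < r) by nra.
  assert (Hrbp : b + p <= r) by nra.
  set (X := b * (b + p) / r - b). set (Y := b * q / r - q).
  assert (HXr : X * r = b * (b + p - r)) by (unfold X; field; lra).
  assert (HYr : Y * r = q * (b - r)) by (unfold Y; field; lra).
  assert (Hq2 : b * (r - (b + p)) <= q ^ 2) by nra.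
  assert (HX : (X * r) ^ 2 <= q ^ 4).
  { rewrite HXr. assert (0 <= b * (r - (b + p))) by nra. nra. }
  assert (Hbr : (b - r) ^ 2 <= p ^ 2 + q ^ 2) by nra.
  assert (HY : (Y * r) ^ 2 <= q ^ 2 * (p ^ 2 + q ^ 2)).
  { rewrite HYr. assert (0 <= q ^ 2) by nra. nra. }
  assert (HXY : (X ^ 2 + Y ^ 2) * r ^ 2 <= 2 * (p ^ 2 + q ^ 2) ^ 2) by nra.
  assert (0 <= X ^ 2 + Y ^ 2) by nra.
  assert (0 <= (X ^ 2 + Y ^ 2) * (r ^ 2 - b ^ 2 / 4)) by (apply Rmult_le_pos; nra).
  nra.
Qed.

Lemma Cphase_perturbation z1 z2 d1 d2 :
  let b := Cmod (z1, z2) in let c := z1 / b in let s := z2 / b in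
  let q := c * d2 - s * d1 in
  0 < b -> d1 ^ 2 + d2 ^ 2 <= b ^ 2 / 4 ->
  (b * fst (Cphase (z1 + d1, z2 + d2)) - z1 + q * s) ^ 2 +
  (b * snd (Cphase (z1 + d1, z2 + d2)) - z2 - q * c) ^ 2 <= 8 * (d1 ^ 2 + d2 ^ 2) ^ 2 / b ^ 2.
Proof.
  intros b c s q Hb HD.
  assert (Hb2 : b ^ 2 = z1 ^ 2 + z2 ^ 2) by apply Cmod_sq.
  assert (Hz1 : z1 = b * c) by (unfold c; field; lra).
  assert (Hz2 : z2 = b * s) by (unfold s; field; lra).
  clearbody b c s.
  assert (Hcs : c ^ 2 + s ^ 2 = 1).
  { assert (b ^ 2 * (c ^ 2 + s ^ 2 - 1) = 0) by (rewrite Hz1, Hz2 in Hb2; nra).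
    apply Rmult_integral in H. destruct H; nra. }
  set (p := c * d1 + s * d2).
  assert (HpqD : p ^ 2 + q ^ 2 = d1 ^ 2 + d2 ^ 2).
  { enough (p ^ 2 + q ^ 2 - (d1 ^ 2 + d2 ^ 2) = (d1 ^ 2 + d2 ^ 2) * (c ^ 2 + s ^ 2 - 1))
      by (rewrite Hcs in H; lra).
    unfold p, q; ring. }
  (* [z + d = (c, s) * (b + p, q)] as complex numbers *)
  assert (Hw1 : z1 + d1 = c * (b + p) - s * q).
  { rewrite Hz1. enough (b * c + d1 - (c * (b + p) - s * q) = d1 * (1 - (c ^ 2 + s ^ 2)))
      by (rewrite Hcs in H; lra). unfold p, q; ring. }
  assert (Hw2 : z2 + d2 = s * (b + p) + c * q).
  { rewrite Hz2. enough (b * s + d2 - (s * (b + p) + c * q) = d2 * (1 - (c ^ 2 + s ^ 2)))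
      by (rewrite Hcs in H; lra). unfold p, q; ring. }
  set (r := Cmod (z1 + d1, z2 + d2)).
  assert (Hr2 : r ^ 2 = (b + p) ^ 2 + q ^ 2).
  { unfold r. rewrite Cmod_sq. simpl fst; simpl snd. rewrite Hw1, Hw2.
    enough ((c * (b + p) - s * q) ^ 2 + (s * (b + p) + c * q) ^ 2 - ((b + p) ^ 2 + q ^ 2)
            = ((b + p) ^ 2 + q ^ 2) * (c ^ 2 + s ^ 2 - 1)) by (rewrite Hcs in H; lra).
    ring. }
  assert (Hr0 : 0 <= r) by apply Cmod_ge0.
  rewrite <- HpqD in HD |- *.
  pose proof (polar_perturbation b p q r Hb Hr0 Hr2 HD) as Hpol.
  assert (Hr : 0 < r) by (assert (Hp : p <= b / 2 /\ - (b / 2) <= p) by (split; nra); nra).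
  rewrite Cphase_nonzero by (fold r; lra). fold r. simpl fst; simpl snd.
  set (X := b * (b + p) / r - b) in Hpol. set (Y := b * q / r - q) in Hpol.
  replace (b * ((z1 + d1) / r) - z1 + q * s) with (c * X - s * Y)
    by (rewrite Hw1; unfold X, Y; rewrite Hz1; field; lra).
  replace (b * ((z2 + d2) / r) - z2 - q * c) with (s * X + c * Y)
    by (rewrite Hw2; unfold X, Y; rewrite Hz2; field; lra).
  replace ((c * X - s * Y) ^ 2 + (s * X + c * Y) ^ 2) with ((X ^ 2 + Y ^ 2) * (c ^ 2 + s ^ 2))
    by ring.
  rewrite Hcs, Rmult_1_r.
  apply (Rmult_le_reg_r (b ^ 2)); [nra|].
  unfold Rdiv. rewrite Rmult_assoc, Rinv_l by nra. lra.
Qed.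

(* [m1 + i m2] is an [N x n] complex matrix acting on real vectors; the real part
   of its adjoint has the same norm bound. *)
Lemma adjoint_norm_le n N (m1 m2 : nat -> nat -> R) lam : 0 <= lam ->
  (forall u : vec, sqrt (rsum N (fun j =>
     rsum n (fun i => m1 j i * u i) ^ 2 + rsum n (fun i => m2 j i * u i) ^ 2))
   <= lam * vnorm n u) ->
  forall w1 w2 : nat -> R,
  vnorm n (fun i => rsum N (fun j => w1 j * m1 j i + w2 j * m2 j i))
  <= lam * sqrt (rsum N (fun j => w1 j ^ 2 + w2 j ^ 2)).
Proof.
  intros Hlam Hm w1 w2.
  set (y := fun i => rsum N (fun j => w1 j * m1 j i + w2 j * m2 j i)).
  set (W := rsum N (fun j => w1 j ^ 2 + w2 j ^ 2)).
  assert (Hy : vnorm n y ^ 2 = rsum N (fun j =>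
     w1 j * rsum n (fun i => m1 j i * y i) + w2 j * rsum n (fun i => m2 j i * y i))).
  { rewrite vnorm_sq.
    rewrite (rsum_ext n _ (fun i => rsum N (fun j => y i * (w1 j * m1 j i + w2 j * m2 j i))))
      by (intros i _; rewrite rsum_scal; change (rsum N _) with (y i); ring).
    rewrite rsum_swap. apply rsum_ext. intros j _.
    rewrite <- !rsum_scal, <- rsum_add. apply rsum_ext. intros. ring. }
  pose proof (Cauchy_Schwarz_rsum2 N w1 w2
                (fun j => rsum n (fun i => m1 j i * y i))
                (fun j => rsum n (fun i => m2 j i * y i))) as Hcs.
  cbv beta in Hcs. rewrite <- Hy in Hcs. fold W in Hcs.
  pose proof (Hm y) as Hmy. pose proof (sqrt_pos W). pose proof (vnorm_ge0 n y).
  assert (Hyy : vnorm n y ^ 2 <= vnorm n y * (lam * sqrt W)).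
  { eapply Rle_trans; [exact Hcs|]. rewrite (Rmult_comm (vnorm n y)).
    replace (lam * sqrt W * vnorm n y) with (sqrt W * (lam * vnorm n y)) by ring.
    now apply Rmult_le_compat_l. }
  assert (0 <= lam * sqrt W) by (apply Rmult_le_pos; assumption).
  nra.
Qed.

Lemma csum_fst n f : fst (csum n f) = rsum n (fun i => fst (f i)).
Proof. induction n; [reflexivity|]. cbn [csum rsum]. unfold Cadd. simpl. now rewrite IHn. Qed.

Section Coisometry.

Variables (n N : nat) (A : cmat).

Definition AstarRe (x : vec) (j : nat) : R := rsum n (fun i => fst (A i j) * x i).
Definition AstarIm (x : vec) (j : nat) : R := rsum n (fun i => - snd (A i j) * x i).

Lemma Astar_apply_eq x j : Astar_apply n A x j = (AstarRe x j, AstarIm x j).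
Proof.
  unfold Astar_apply, AstarRe, AstarIm.
  induction n as [|m IH]; [reflexivity|]. cbn [csum rsum]. rewrite IH.
  unfold Cadd, Cmul, Cconj, CofR. simpl. f_equal; ring.
Qed.

Lemma AstarRe_sub x y j : AstarRe (vsub x y) j = AstarRe x j - AstarRe y j.
Proof. unfold AstarRe. rewrite <- rsum_sub. apply rsum_ext. intros. unfold vsub. ring. Qed.

Lemma AstarIm_sub x y j : AstarIm (vsub x y) j = AstarIm x j - AstarIm y j.
Proof. unfold AstarIm. rewrite <- rsum_sub. apply rsum_ext. intros. unfold vsub. ring. Qed.

Hypothesis Hiso : isometric n N A.

Lemma A_Astar_re (y : vec) i : (i < n)%nat ->
  rsum N (fun j => fst (A i j) * AstarRe y j - snd (A i j) * AstarIm y j) = y i.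
Proof.
  intros Hi.
  transitivity (rsum N (fun j => rsum n (fun i' => y i' *
     (fst (A i j) * fst (A i' j) + snd (A i j) * snd (A i' j))))).
  { apply rsum_ext; intros j _. unfold AstarRe, AstarIm.
    rewrite <- !rsum_scal, <- rsum_sub. apply rsum_ext; intros; ring. }
  rewrite rsum_swap, <- (rsum_delta n i y Hi). apply rsum_ext. intros i' Hi'.
  rewrite rsum_scal, Rmult_comm. f_equal.
  pose proof (f_equal fst (Hiso i i' Hi Hi')) as H. rewrite csum_fst in H.
  replace (if Nat.eq_dec i i' then 1 else 0) with (fst (if Nat.eq_dec i i' then Defs.C1 else C0))
    by now destruct (Nat.eq_dec i i').
  etransitivity; [|exact H]. apply rsum_ext. intros. unfold Cmul, Cconj. simpl. ring.
Qed.

Lemma Astar_parseval (y : vec) :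
  rsum N (fun j => AstarRe y j ^ 2 + AstarIm y j ^ 2) = rsum n (fun i => y i ^ 2).
Proof.
  transitivity (rsum N (fun j => rsum n (fun i =>
    y i * (fst (A i j) * AstarRe y j - snd (A i j) * AstarIm y j)))).
  { apply rsum_ext; intros j _.
    rewrite (rsum_ext n _ (fun i => AstarRe y j * (fst (A i j) * y i)
                                   + AstarIm y j * (- snd (A i j) * y i))) by (intros; ring).
    rewrite rsum_add, !rsum_scal.
    change (rsum n (fun i => fst (A i j) * y i)) with (AstarRe y j).
    change (rsum n (fun i => - snd (A i j) * y i)) with (AstarIm y j). ring. }
  rewrite rsum_swap. apply rsum_ext. intros i Hi. rewrite rsum_scal, A_Astar_re by assumption. ring.
Qed.

Lemma Astar_norm_le (y : vec) :
  sqrt (rsum N (fun j => AstarRe y j ^ 2 + AstarIm y j ^ 2)) <= 1 * vnorm n y.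
Proof. rewrite Astar_parseval, vnorm_eq. lra. Qed.

Lemma A_re_norm_le (w1 w2 : nat -> R) :
  vnorm n (fun i => rsum N (fun j => w1 j * fst (A i j) + w2 j * - snd (A i j)))
  <= sqrt (rsum N (fun j => w1 j ^ 2 + w2 j ^ 2)).
Proof.
  rewrite <- (Rmult_1_l (sqrt _)).
  apply (adjoint_norm_le n N (fun j i => fst (A i j)) (fun j i => - snd (A i j))); [lra|].
  exact Astar_norm_le.
Qed.
End Coisometry.

Section Linearization.

Variables (n N : nat) (A : cmat) (x0 : vec).

Definition phase0 (j : nat) : Defs.C := Cphase (Astar_apply n A x0 j).

Definition ImB (j i : nat) : R := Cim (Cconj (Bmat n A x0 i j)).
Definition ImBstar (u : vec) (j : nat) : R := rsum n (fun i => ImB j i * u i).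

Lemma ImBstar_norm_eq u : ImBstar_norm n N A x0 u = vnorm N (ImBstar u).
Proof. rewrite vnorm_eq. reflexivity. Qed.

Lemma ImBstar_eq u j :
  ImBstar u j = fst (phase0 j) * AstarIm n A u j - snd (phase0 j) * AstarRe n A u j.
Proof.
  unfold ImBstar, ImB, AstarIm, AstarRe.
  rewrite <- !rsum_scal, <- rsum_sub. apply rsum_ext. intros.
  unfold Bmat, Cim, Cconj, Cmul, phase0. simpl. ring.
Qed.

Lemma ImBstar_x0 j : ImBstar x0 j = 0.
Proof.
  rewrite ImBstar_eq. unfold phase0. rewrite Astar_apply_eq.
  set (z := (AstarRe n A x0 j, AstarIm n A x0 j)).
  destruct (Req_dec (Cmod z) 0) as [H|H].
  - destruct (Cmod_eq0 z H) as [H1 H2]. simpl in H1, H2. rewrite H1, H2. ring.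
  - rewrite Cphase_nonzero by assumption. simpl. field. assumption.
Qed.

Lemma ImBstar_sub_x0 u c j : ImBstar (vsub u (vscal c x0)) j = ImBstar u j.
Proof.
  transitivity (ImBstar u j - c * ImBstar x0 j); [|rewrite ImBstar_x0; ring].
  unfold ImBstar. rewrite <- rsum_scal, <- rsum_sub. apply rsum_ext. intros.
  unfold vsub, vscal. ring.
Qed.

Variable lam2 : R.
Hypothesis Hlam : is_lambda2 n N A x0 lam2.
Hypothesis Hx0 : 0 < vnorm n x0.

Lemma lambda2_ge0 : 0 <= lam2.
Proof. destruct Hlam as [[u [_ [_ <-]]] _]. apply sqrt_pos. Qed.

Lemma ImBstar_orth_le u : vinner n u x0 = 0 -> vnorm N (ImBstar u) <= lam2 * vnorm n u.
Proof.
  intros Hu. pose proof lambda2_ge0. destruct Hlam as [_ Hmax].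
  destruct (vnorm_ge0 n u) as [Ht|Ht].
  - set (t := vnorm n u) in *.
    assert (Hu' : vinner n (vscal (/ t) u) x0 = 0).
    { unfold vinner, vscal. rewrite (rsum_ext n _ (fun i => / t * (u i * x0 i))) by (intros; ring).
      rewrite rsum_scal. fold (vinner n u x0). rewrite Hu. ring. }
    assert (Hn : vnorm n (vscal (/ t) u) = 1).
    { rewrite vnorm_scal, Rabs_pos_eq by (left; apply Rinv_0_lt_compat; lra).
      fold t. field. lra. }
    pose proof (Hmax _ Hu' Hn) as Hb. rewrite ImBstar_norm_eq in Hb.
    rewrite (vnorm_ext N _ (vscal (/ t) (ImBstar u))) in Hb
      by (intros; unfold ImBstar, vscal; rewrite <- rsum_scal; apply rsum_ext; intros; ring).
    rewrite vnorm_scal, Rabs_pos_eq in Hb by (left; apply Rinv_0_lt_compat; lra).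
    apply (Rmult_le_reg_l (/ t)); [apply Rinv_0_lt_compat; lra|].
    replace (/ t * (lam2 * t)) with lam2 by (field; lra). exact Hb.
  - rewrite <- Ht, Rmult_0_r.
    assert (Hz : forall i, (i < n)%nat -> u i = 0).
    { apply rsum_sq_eq0. rewrite <- vnorm_sq, <- Ht. ring. }
    rewrite vnorm_eq, (rsum_ext N _ (fun _ => 0)), rsum_0, sqrt_0; [lra|].
    intros j _. unfold ImBstar. rewrite (rsum_ext n _ (fun _ => 0)), rsum_0; [ring|].
    intros i Hi. rewrite Hz by assumption. ring.
Qed.

Lemma ImBstar_le u : vnorm N (ImBstar u) <= lam2 * vnorm n u.
Proof.
  destruct (orthogonal_part n x0 u Hx0) as [c [Horth Hle]].
  rewrite (vnorm_ext N _ (ImBstar (vsub u (vscal c x0)))) by (intros; now rewrite ImBstar_sub_x0).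
  eapply Rle_trans; [now apply ImBstar_orth_le|].
  apply Rmult_le_compat_l; [apply lambda2_ge0|assumption].
Qed.

Lemma ImB_adjoint_le (w : nat -> R) :
  vnorm n (fun i => rsum N (fun j => w j * ImB j i)) <= lam2 * vnorm N w.
Proof.
  pose proof (adjoint_norm_le n N ImB (fun _ _ => 0) lam2 lambda2_ge0) as H.
  rewrite (vnorm_ext n _ (fun i => rsum N (fun j => w j * ImB j i + 0 * 0))),
    (vnorm_eq N w), (rsum_ext N _ (fun j => w j ^ 2 + 0 ^ 2)).
  - apply H. intros u. rewrite (rsum_ext N _ (fun j => ImBstar u j ^ 2)), <- vnorm_eq.
    + apply ImBstar_le.
    + intros. cbv beta.
      rewrite (rsum_ext n (fun i => 0 * u i) (fun _ => 0)), rsum_0 by (intros; ring).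
      unfold ImBstar. ring.
  - intros; ring.
  - intros; apply rsum_ext; intros; ring.
Qed.

Definition support (j : nat) : R := if Req_EM_T (bvec n A x0 j) 0 then 0 else 1.

Lemma linear_part_le e :
  vnorm n (fun i => rsum N (fun j => support j * ImBstar e j * ImB j i)) <= lam2 ^ 2 * vnorm n e.
Proof.
  eapply Rle_trans; [apply (ImB_adjoint_le (fun j => support j * ImBstar e j))|].
  replace (lam2 ^ 2 * vnorm n e) with (lam2 * (lam2 * vnorm n e)) by ring.
  apply Rmult_le_compat_l; [apply lambda2_ge0|].
  eapply Rle_trans; [|apply ImBstar_le].
  apply vnorm_le_compat. intros j _. unfold support.
  destruct (Req_EM_T _ _); [|lra]. pose proof (pow2_ge_0 (ImBstar e j)). nra.
Qed.
End Linearization.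

Lemma projX_dist_le X n (x0 : vec) (y : nat -> Defs.C) i : inX X n x0 -> (i < n)%nat ->
  (projX X y i - x0 i) ^ 2 <= (Cre (y i) - x0 i) ^ 2.
Proof.
  intros HX Hi. destruct X; simpl projX; [lra|].
  specialize (HX i Hi). unfold Rmax. destruct (Rle_dec (Cre (y i)) 0); nra.
Qed.

Lemma quadratic_ratio_le D E b beta : 0 <= D -> D <= E -> 0 < beta -> beta <= b ->
  8 * D ^ 2 / b ^ 2 <= 8 * D * E / beta ^ 2.
Proof.
  intros HD HDE Hbeta Hb.
  apply (Rmult_le_reg_r (b ^ 2 * beta ^ 2)); [apply Rmult_lt_0_compat; apply pow_lt; lra|].
  replace (8 * D ^ 2 / b ^ 2 * (b ^ 2 * beta ^ 2)) with (8 * D * (D * beta ^ 2)) by (field; lra).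
  replace (8 * D * E / beta ^ 2 * (b ^ 2 * beta ^ 2)) with (8 * D * (E * b ^ 2)) by (field; lra).
  apply Rmult_le_compat_l; [lra|].
  apply Rmult_le_compat; [lra|apply pow2_ge_0|lra|apply pow_incr; lra].
Qed.

Section Step.

Variables (n N : nat) (A : cmat) (x0 : vec).
Hypothesis Hiso : isometric n N A.

(* The remainder in [b * phase (A^* x) = A^* x0 + i q * phase0 + remainder]. *)
Definition phase_remainder (x : vec) (j : nat) : Defs.C :=
  let q := support n A x0 j * ImBstar n A x0 (vsub x x0) j in
  let b := bvec n A x0 j in let w := Cphase (Astar_apply n A x j) in
  (b * fst w - AstarRe n A x0 j + q * snd (phase0 n A x0 j),
   b * snd w - AstarIm n A x0 j - q * fst (phase0 n A x0 j)).

Lemma Fmap_re_decomposition x i : (i < n)%nat ->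
  Cre (csum N (fun j => Cmul (A i j) (Cscale (bvec n A x0 j) (Cphase (Astar_apply n A x j)))))
    - x0 i
  = rsum N (fun j => fst (phase_remainder x j) * fst (A i j)
                     + snd (phase_remainder x j) * - snd (A i j))
  + rsum N (fun j => support n A x0 j * ImBstar n A x0 (vsub x x0) j * ImB n A x0 j i).
Proof.
  intros Hi. unfold Cre. rewrite csum_fst, <- (A_Astar_re n N A Hiso x0 i Hi).
  rewrite <- rsum_sub, <- rsum_add. apply rsum_ext. intros j _.
  unfold phase_remainder, ImB, Bmat, phase0, Cmul, Cscale, Cim, Cconj. simpl. ring.
Qed.

Variable beta : R.
Hypothesis Hbeta_pos : 0 < beta.
Hypothesis Hbeta : forall j, (j < N)%nat -> bvec n A x0 j <> 0 -> beta <= bvec n A x0 j.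

Lemma phase_remainder_le x j : (j < N)%nat -> vnorm n (vsub x x0) <= beta / 2 ->
  fst (phase_remainder x j) ^ 2 + snd (phase_remainder x j) ^ 2 <=
  8 * (AstarRe n A (vsub x x0) j ^ 2 + AstarIm n A (vsub x x0) j ^ 2)
    * vnorm n (vsub x x0) ^ 2 / beta ^ 2.
Proof.
  intros Hj Hx. set (e := vsub x x0) in *.
  set (d1 := AstarRe n A e j). set (d2 := AstarIm n A e j).
  set (z1 := AstarRe n A x0 j). set (z2 := AstarIm n A x0 j).
  assert (HD : d1 ^ 2 + d2 ^ 2 <= vnorm n e ^ 2).
  { rewrite vnorm_sq, <- (Astar_parseval n N A Hiso e).
    apply (rsum_term_le N (fun j => AstarRe n A e j ^ 2 + AstarIm n A e j ^ 2)); [|assumption].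
    intros; apply sum_sq_ge0. }
  assert (HE : vnorm n e ^ 2 <= beta ^ 2 / 4) by (pose proof (vnorm_ge0 n e); nra).
  assert (Hb : bvec n A x0 j = Cmod (z1, z2)) by (unfold bvec; now rewrite Astar_apply_eq).
  assert (Hrhs : 0 <= 8 * (d1 ^ 2 + d2 ^ 2) * vnorm n e ^ 2 / beta ^ 2).
  { apply Rmult_le_pos; [|left; apply Rinv_0_lt_compat; nra].
    pose proof (sum_sq_ge0 d1 d2). pose proof (pow2_ge_0 (vnorm n e)). nra. }
  unfold phase_remainder, support. fold e. rewrite Hb.
  destruct (Req_EM_T (Cmod (z1, z2)) 0) as [H0|H0].
  - destruct (Cmod_eq0 _ H0) as [Hz1 Hz2]. simpl in Hz1, Hz2.
    simpl fst; simpl snd. fold z1 z2. rewrite H0, Hz1, Hz2.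
    replace ((0 * _ - 0 + 0 * _ * _) ^ 2 + (0 * _ - 0 - 0 * _ * _) ^ 2) with 0 by ring.
    assumption.
  - set (b := Cmod (z1, z2)) in *.
    assert (Hbb : beta <= b) by (rewrite <- Hb; apply Hbeta; [assumption|rewrite Hb; assumption]).
    assert (Hph : phase0 n A x0 j = (z1 / b, z2 / b)).
    { unfold phase0. rewrite Astar_apply_eq, Cphase_nonzero by assumption. reflexivity. }
    assert (Hx' : Astar_apply n A x j = (z1 + d1, z2 + d2)).
    { rewrite Astar_apply_eq. unfold z1, z2, d1, d2, e. rewrite AstarRe_sub, AstarIm_sub.
      f_equal; ring. }
    assert (Hq : ImBstar n A x0 e j = z1 / b * d2 - z2 / b * d1)
      by (rewrite ImBstar_eq, Hph; reflexivity).
    pose proof (Cphase_perturbation z1 z2 d1 d2) as Hpert. cbv zeta in Hpert. fold b in Hpert.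
    rewrite Hx', Hq, Hph, !Rmult_1_l. simpl fst; simpl snd.
    eapply Rle_trans; [apply Hpert; nra|].
    apply quadratic_ratio_le; [apply sum_sq_ge0|assumption|lra|assumption].
Qed.

Lemma phase_remainder_norm_le x : vnorm n (vsub x x0) <= beta / 2 ->
  sqrt (rsum N (fun j => fst (phase_remainder x j) ^ 2 + snd (phase_remainder x j) ^ 2))
  <= 3 * vnorm n (vsub x x0) ^ 2 / beta.
Proof.
  intros Hx. set (t := vnorm n (vsub x x0)) in *.
  assert (Ht : 0 <= t) by apply vnorm_ge0.
  assert (H3 : 0 <= 3 * t ^ 2 / beta)
    by (apply Rmult_le_pos; [nra|left; now apply Rinv_0_lt_compat]).
  rewrite <- (sqrt_pow2 (3 * t ^ 2 / beta) H3). apply sqrt_le_1_alt.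
  eapply Rle_trans.
  { apply (rsum_le N _ (fun j => 8 * t ^ 2 / beta ^ 2 *
             (AstarRe n A (vsub x x0) j ^ 2 + AstarIm n A (vsub x x0) j ^ 2))).
    intros j Hj. eapply Rle_trans; [exact (phase_remainder_le x j Hj Hx)|].
    fold t. right. field. lra. }
  rewrite rsum_scal, (Astar_parseval n N A Hiso), <- vnorm_sq. fold t.
  replace ((3 * t ^ 2 / beta) ^ 2) with (9 * t ^ 4 * / beta ^ 2) by (field; lra).
  replace (8 * t ^ 2 / beta ^ 2 * t ^ 2) with (8 * t ^ 4 * / beta ^ 2) by (field; lra).
  apply Rmult_le_compat_r; [left; apply Rinv_0_lt_compat, pow_lt; lra|].
  pose proof (pow2_ge_0 (t ^ 2)). nra.
Qed.

Variable lam2 : R.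
Hypothesis Hlam : is_lambda2 n N A x0 lam2.
Hypothesis Hx0 : 0 < vnorm n x0.

Lemma Fmap_step X x : inX X n x0 -> vnorm n (vsub x x0) <= beta / 2 ->
  vnorm n (vsub (Fmap X n N A x0 x) x0) <=
  lam2 ^ 2 * vnorm n (vsub x x0) + 3 * vnorm n (vsub x x0) ^ 2 / beta.
Proof.
  intros HX Hx.
  eapply Rle_trans.
  { apply vnorm_le_compat. intros i Hi. unfold vsub at 1, Fmap. now apply (projX_dist_le X n). }
  cbv beta. rewrite (vnorm_ext n _ _ (Fmap_re_decomposition x)).
  eapply Rle_trans; [apply vnorm_add_le|].
  pose proof (A_re_norm_le n N A Hiso (fun j => fst (phase_remainder x j))
                (fun j => snd (phase_remainder x j))) as Hrem.
  pose proof (phase_remainder_norm_le x Hx).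
  pose proof (linear_part_le n N A x0 lam2 Hlam Hx0 (vsub x x0)).
  cbv beta in Hrem. lra.
Qed.
End Step.

Lemma positive_lower_bound (b : nat -> R) N : (forall j, 0 <= b j) ->
  exists beta, 0 < beta /\ forall j, (j < N)%nat -> b j <> 0 -> beta <= b j.
Proof.
  intros Hb. induction N as [|N [beta [Hpos Hle]]].
  - exists 1. split; [lra|]. intros; lia.
  - destruct (Req_dec (b N) 0) as [H0|H0].
    + exists beta. split; [assumption|]. intros j Hj Hn.
      destruct (Nat.eq_dec j N) as [->|]; [contradiction|]. apply Hle; [lia|assumption].
    + exists (Rmin beta (b N)). split; [apply Rmin_pos; [|specialize (Hb N)]; lra|].
      intros j Hj Hn. destruct (Nat.eq_dec j N) as [->|]; [apply Rmin_r|].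
      eapply Rle_trans; [apply Rmin_l|]. apply Hle; [lia|assumption].
Qed.

Lemma Fmap_local_contraction n N A X x0 lam2 eps :
  isometric n N A -> inX X n x0 -> 0 < vnorm n x0 -> is_lambda2 n N A x0 lam2 -> 0 < eps ->
  exists delta, 0 < delta /\ delta <= vnorm n x0 /\
    forall x, vnorm n (vsub x x0) < delta ->
      vnorm n (vsub (Fmap X n N A x0 x) x0) <= (lam2 ^ 2 + eps) * vnorm n (vsub x x0).
Proof.
  intros Hiso HX Hx0 Hlam Heps.
  destruct (positive_lower_bound (bvec n A x0) N) as [beta [Hbeta_pos Hbeta]];
    [intros; apply Cmod_ge0|].
  (* the quadratic error [3 t^2 / beta] is at most [eps t] once [t <= eps beta / 3] *)
  exists (Rmin (beta / 2) (Rmin (vnorm n x0) (eps * beta / 3))).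
  assert (Hd1 := Rmin_l (beta / 2) (Rmin (vnorm n x0) (eps * beta / 3))).
  assert (Hd2 := Rmin_r (beta / 2) (Rmin (vnorm n x0) (eps * beta / 3))).
  assert (Hd3 := Rmin_l (vnorm n x0) (eps * beta / 3)).
  assert (Hd4 := Rmin_r (vnorm n x0) (eps * beta / 3)).
  split; [repeat apply Rmin_pos; nra|]. split; [lra|].
  intros x Hx. set (t := vnorm n (vsub x x0)) in *. assert (Ht : 0 <= t) by apply vnorm_ge0.
  eapply Rle_trans;
    [apply (Fmap_step n N A x0 Hiso beta Hbeta_pos Hbeta lam2 Hlam Hx0 X x HX); fold t; lra|].
  fold t. assert (3 * t ^ 2 / beta <= eps * t); [|lra].
  apply (Rmult_le_reg_r beta); [assumption|].
  replace (3 * t ^ 2 / beta * beta) with (3 * t * t) by (field; lra). nra.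
Qed.

Lemma iter_dist_lt (F : vec -> vec) n x0 rho delta x1 : rho <= 1 ->
  (forall x, vnorm n (vsub x x0) < delta ->
     vnorm n (vsub (F x) x0) <= rho * vnorm n (vsub x x0)) ->
  vnorm n (vsub x1 x0) < delta -> forall k, vnorm n (vsub (Nat.iter k F x1) x0) < delta.
Proof.
  intros Hrho HF Hx1 k. induction k as [|k IH]; [exact Hx1|].
  simpl. pose proof (HF _ IH). pose proof (vnorm_ge0 n (vsub (Nat.iter k F x1) x0)). nra.
Qed.

Lemma alpha_near X n x0 x : vnorm n (vsub x x0) < vnorm n x0 ->
  vnorm n (vsub (vscal (alpha X n x0 x) x) x0) = vnorm n (vsub x x0).
Proof.
  intros Hx.
  assert (Halpha : alpha X n x0 x = 1).
  { destruct X; [simpl|reflexivity].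
    destruct (Rle_dec _ _) as [|Hn]; [reflexivity|exfalso; apply Hn].
    assert (E : vnorm n (vsub (vscal (-1) x) x0) ^ 2
              = vnorm n (vsub x x0) ^ 2 + 4 * (vnorm n x0 ^ 2 - vinner n (vsub x0 x) x0)).
    { rewrite !vnorm_sq. unfold vinner. rewrite <- rsum_sub, <- rsum_scal, <- rsum_add.
      apply rsum_ext. intros. unfold vsub, vscal. ring. }
    assert (Hcs := vinner_le n (vsub x0 x) x0).
    rewrite (vnorm_ext n _ (vscal (-1) (vsub x x0))), vnorm_scal in Hcs
      by (intros; unfold vsub, vscal; ring).
    replace (Rabs (-1)) with 1 in Hcs by (rewrite Rabs_left; lra).
    pose proof (vnorm_ge0 n (vsub x x0)). pose proof (vnorm_ge0 n (vsub (vscal (-1) x) x0)).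
    nra. }
  rewrite Halpha. apply vnorm_ext. intros. unfold vsub, vscal. ring.
Qed.

Theorem mainTheorem11 (n N : nat) (A : cmat) (X : Xkind) (x0 : vec) (lam2 : R) :
  isometric n N A ->
  inX X n x0 ->
  (exists i, (i < n)%nat /\ x0 i <> 0) ->
  is_lambda2 n N A x0 lam2 ->
  lam2 < 1 ->
  forall eps : R, 0 < eps -> eps < 1 - lam2 ^ 2 ->
  exists delta : R, 0 < delta /\
    forall x1 : vec, inX X n x1 -> vnorm n (vsub x1 x0) < delta ->
      forall k : nat,
        let xk := Nat.iter k (Fmap X n N A x0) x1 in
        let xk1 := Nat.iter (S k) (Fmap X n N A x0) x1 in
        vnorm n (vsub (vscal (alpha X n x0 xk1) xk1) x0)
        <= (lam2 ^ 2 + eps) * vnorm n (vsub (vscal (alpha X n x0 xk) xk) x0).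
Proof.
  intros Hiso HX Hx0 Hlam _ eps Heps Heps1.
  apply vnorm_pos in Hx0.
  destruct (Fmap_local_contraction n N A X x0 lam2 eps Hiso HX Hx0 Hlam Heps)
    as [delta [Hdelta [Hdx0 Hstep]]].
  exists delta. split; [exact Hdelta|]. intros x1 _ Hx1 k xk xk1.
  assert (Hball := iter_dist_lt _ n x0 (lam2 ^ 2 + eps) delta x1 ltac:(lra) Hstep Hx1).
  pose proof (Hball k). pose proof (Hball (S k)).
  unfold xk1, xk. rewrite !alpha_near by lra.
  now apply Hstep.
Qed.
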